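(* Let $\{\mu_n\}_{n\ge0}$ be a consistent family of (possibly infinite) measures, $\mu_n$ on $(\Omega_n,\mathcal{B}_n)$. If for some $n_0$ the measure $\mu_{n_0}$ is $\sigma$-finite, then there exists a unique $\sigma$-additive measure $\bar\mu$ on $(\Omega,\mathcal{B})$ such that $\pi_{V_n}(\bar\mu)=\mu_n$ for all $n$.
   Context: Let $\Im^k=(V,L)$ be the Cayley tree of order $k\ge1$, with vertices enumerated as $V=\{x_0,x_1,\dots\}$. Let $\Phi$ be a finite or countably infinite set, $\Omega=\Phi^V$ with metric $\rho(\sigma,\sigma')=\sum_{n\ge0}2^{-n}\mathbf{1}_{\{\sigma(x_n)\ne\sigma'(x_n)\}}$ and Borel $\sigma$-field $\mathcal{B}$. Fix $x^0\in V$, let $d$ be the graph distance, $V_n=\{x\in V: d(x,x^0)\le n\}$, $\Omega_n=\Phi^{V_n}$ (countable, discrete) with $\mathcal{B}_n$ its power set, and $\pi_n:\Omega\to\Omega_n$, $\pi_n(\sigma)=\sigma|_{V_n}$. Projections of measures: $[\pi_{V_i}(\nu)](B)=\nu\{\sigma\in\Omega_j:\sigma|_{V_i}\in B\}$ for $\nu$ on $\mathcal{B}_j$, $i<j$, and $[\pi_{V_n}(\mu)](B)=\mu(\pi_n^{-1}(B))$ for $\mu$ on $\mathcal{B}$. Consistency means $\pi_{V_i}(\mu_j)=\mu_i$ for all $i<j$. *)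

From HB Require Import structures.
From mathcomp Require Import all_boot all_order all_algebra.
From mathcomp Require Import all_classical all_reals.
From mathcomp Require Import ereal sequences measure.
Set Implicit Arguments. Unset Strict Implicit. Unset Printing Implicit Defensive.
Import Order.TTheory GRing.Theory Num.Theory.
Local Open Scope classical_set_scope.
Local Open Scope ring_scope.

(* The single-spin set Phi : a countable (finite or countably infinite), nonempty type. *)
HB.structure Definition PointedCount := {T of Countable T & isPointed T}.

(* Vertices: reduced words over the alphabet {0..k} (no two consecutive equal letters);
   this is the Cayley graph of the free product of k+1 copies of Z/2, i.e. the
   (k+1)-regular tree.  Edges: w ~ w a. *)
Definition reduced (k : nat) (s : seq 'I_k.+1) : bool :=
  sorted (fun a b : 'I_k.+1 => a != b) s.

Definition CVertex (k : nat) := {s : seq 'I_k.+1 | reduced s}.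

Definition cadj (k : nat) (u w : CVertex k) : bool :=
  let u' := val u in let w' := val w in
  ((w' != [::]) && (u' == take (size w').-1 w')) ||
  ((u' != [::]) && (w' == take (size u').-1 u')).

(* V_n = { x : d(x, x0) <= n } : there is a path of length <= n from x0 to x. *)
Definition inVn (k : nat) (x0 : CVertex k) (n : nat) (x : CVertex k) : Prop :=
  exists p : seq (CVertex k), (size p <= n)%N /\ path (@cadj k) x0 p /\ last x0 p = x.

Lemma inVn_mono (k : nat) (x0 : CVertex k) (i j : nat) (x : CVertex k) :
  (i <= j)%N -> inVn x0 i x -> inVn x0 j x.
Proof. by move=> hij [p [hp [hpath hl]]]; exists p; split => //; exact: leq_trans hp hij. Qed.

Definition Vn (k : nat) (x0 : CVertex k) (n : nat) := {x : CVertex k | inVn x0 n x}.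

Section OmegaN.
Variables (Phi : PointedCount.type) (k : nat) (x0 : CVertex k) (n : nat).
Definition Omega_n := Vn x0 n -> Phi.
HB.instance Definition _ := Pointed.copy Omega_n (Vn x0 n -> Phi).
HB.instance Definition _ := @isMeasurable.Build default_measure_display
  Omega_n discrete_measurable discrete_measurable0
  discrete_measurableC discrete_measurableU.
End OmegaN.

Section OmegaDef.
Variables (R : realType) (Phi : PointedCount.type) (k : nat) (e : nat -> CVertex k).

Definition rho (s s' : CVertex k -> Phi) : \bar R :=
  \sum_(0 <= m <oo) ((2 ^- m * ((s (e m) != s' (e m)) : nat)%:R)%:E)%E.

Definition rho_open (U : set (CVertex k -> Phi)) : Prop :=
  forall s, U s -> exists r : R, 0 < r /\ (forall s', (rho s s' < r%:E)%E -> U s').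

Definition Omega := g_sigma_algebraType rho_open.
End OmegaDef.

Definition pi_n (R : realType) (Phi : PointedCount.type) (k : nat)
  (e : nat -> CVertex k) (x0 : CVertex k) (n : nat)
  (s : Omega R Phi e) : Omega_n Phi x0 n := fun x => s (proj1_sig x).

Definition restr_ij (Phi : PointedCount.type) (k : nat) (x0 : CVertex k) (i j : nat)
  (h : (i <= j)%N) (s : Omega_n Phi x0 j) : Omega_n Phi x0 i :=
  fun x => s (exist _ (proj1_sig x) (inVn_mono h (proj2_sig x))).

From HB Require Import structures.
From mathcomp Require Import all_boot all_order all_algebra.
From mathcomp Require Import all_classical all_reals.
From mathcomp Require Import ereal sequences measure normedtype.
From mathcomp Require Import zify ring.
Import Order.TTheory GRing.Theory Num.Theory.
Local Open Scope classical_set_scope.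
Local Open Scope ring_scope.
Set Implicit Arguments. Unset Strict Implicit. Unset Printing Implicit Defensive.

(* The cylinders pr_n^-1(B) form a ring of sets on which the consistent family
   defines an additive content, C(pr_n^-1 B) = mu_n(B).  Each Omega_n is countable
   and discrete, so sigma-subadditivity of C reduces to points: if mu_m exceeds the
   covering sum at a point, consistency lets the excess propagate to a point of the
   next level, and iterating yields a configuration on the whole tree; it lies in
   one of the covering cylinders, at whose level no excess is possible.
   Caratheodory's extension then gives a measure on the sigma-algebra generated by
   the cylinders, which is the Borel sigma-algebra of rho since every V_n is finite
   and every vertex lies in some V_n.  Uniqueness is the pi-lambda theorem: the
   cylinders over a sigma-finite cover of Omega_n0 cover Omega. *)

Section CayleyTree.
Variable k : nat.
Local Notation V := (CVertex k).

Lemma cadj_sym (u w : V) : cadj u w = cadj w u.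
Proof. by rewrite /cadj orbC. Qed.

Lemma cadj_size (u w : V) : cadj u w -> (size (val w) <= (size (val u)).+1)%N.
Proof.
rewrite /cadj => /orP[/andP[_ /eqP ->]|/andP[_ /eqP ->]]; rewrite size_take.
  by case: (size (val w)) => //= n; rewrite ltnSn.
by case: (size (val u)) => //= n; case: ifP => // _; lia.
Qed.

Lemma size_last_path (x : V) p : path (@cadj k) x p ->
  (size (val (last x p)) <= size (val x) + size p)%N.
Proof.
elim: p x => [|y p IH] x; first by rewrite /= addn0.
rewrite [path _ _ _]/= [last _ _]/= [size (_ :: _)]/=.
by case/andP=> /cadj_size hxy /IH; lia.
Qed.

Lemma inVn_size (x v : V) n : inVn x n v -> (size (val v) <= size (val x) + n)%N.
Proof. by move=> [p [hp [/size_last_path + <-]]]; lia. Qed.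

Lemma inVn_rcons (x y z : V) n : inVn x n y -> cadj y z -> inVn x n.+1 z.
Proof.
move=> [p [hp [hpath hl]]] hyz; exists (rcons p z).
by rewrite size_rcons rcons_path hpath hl hyz last_rcons.
Qed.

Lemma inVn_sym (x y : V) n : inVn x n y -> inVn y n x.
Proof.
move=> [p [hp [hpath hl]]]; exists (rev (belast x p)); split.
  by rewrite size_rev size_belast.
split; first by rewrite -hl rev_path (@eq_path _ _ (@cadj k)) // => a b; exact: cadj_sym.
by case: p {hp hpath} hl => [|a p] /= <- //; rewrite rev_cons last_rcons.
Qed.

Lemma inVn_trans (x y z : V) n m : inVn x n y -> inVn y m z -> inVn x (n + m) z.
Proof.
move=> [p [hp [hpath hl]]] [q [hq [hqath hql]]]; exists (p ++ q).
by rewrite size_cat leq_add // cat_path last_cat hl hpath hqath.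
Qed.

Definition root : V := exist _ [::] isT.

Lemma inVn_root (w : V) : inVn root (size (val w)) w.
Proof.
case: w => s; elim/last_ind: s => [|s a IH] hs.
  by exists [::]; do 2!split => //; congr exist; exact: bool_irrelevance.
have hs' : reduced s.
  by move: hs; rewrite /reduced -cats1 => /(take_sorted (size s)); rewrite take_size_cat.
rewrite size_rcons; apply: inVn_rcons (IH hs') _.
by rewrite /cadj /= -cats1 size_cat addn1 /= take_size_cat // eqxx; case: s {IH hs hs'}.
Qed.

Lemma inVn_sizeD (x v : V) : inVn x (size (val x) + size (val v)) v.
Proof. exact: inVn_trans (inVn_sym (inVn_root x)) (inVn_root v). Qed.

Fixpoint short_words (N : nat) : seq (seq 'I_k.+1) :=
  if N is N'.+1 then [::] :: [seq a :: s | a <- enum 'I_k.+1, s <- short_words N']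
  else [:: [::]].

Lemma mem_short_words N s : (size s <= N)%N -> s \in short_words N.
Proof.
elim: N s => [|N IH] [|a s] //= hs.
by rewrite inE; apply/orP; right; apply: allpairs_f; [rewrite mem_enum|exact: IH].
Qed.

End CayleyTree.
Section Configurations.
Variables (Phi : PointedCount.type) (k : nat) (x0 : CVertex k).
Local Notation V := (CVertex k).
Local Notation Om n := (Omega_n Phi x0 n).

Definition pr n (s : V -> Phi) : Om n := fun x => s (sval x).
Arguments pr : clear implicits.

Definition ext n (w : Om n) : V -> Phi := fun v =>
  if pselect (inVn x0 n v) is left h then w (exist _ v h) else point.

Lemma Vn_val_inj n : injective (@sval _ (inVn x0 n)).
Proof. by move=> [x hx] [y hy] /= exy; subst y; rewrite (Prop_irrelevance hx hy). Qed.

Lemma pr_ext n : cancel (@ext n) (pr n).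
Proof.
move=> w; apply: funext => x; rewrite /pr /ext.
by case: pselect => [h|/(_ (svalP x))//]; congr w; exact: Vn_val_inj.
Qed.

Lemma pr_surj n : pr n @` setT = setT.
Proof. by apply/seteqP; split => // w _; exists (ext w); rewrite ?pr_ext. Qed.

Lemma preimage_pr_inj n : injective (preimage (pr n)).
Proof.
move=> B B' eB; apply/seteqP; split => w.
  by move: (congr1 (@^~ (ext w)) eB); rewrite /preimage /= pr_ext => ->.
by move: (congr1 (@^~ (ext w)) eB); rewrite /preimage /= pr_ext => <-.
Qed.

Lemma preimage_pr_restr i j (hij : (i <= j)%N) (B : set (Om i)) :
  pr j @^-1` (restr_ij hij @^-1` B) = pr i @^-1` B.
Proof. by []. Qed.

Lemma pr_eq_le i j s s' : (i <= j)%N -> pr j s = pr j s' -> pr i s = pr i s'.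
Proof. by move=> hij /(congr1 (restr_ij hij)). Qed.

(* V_n only contains words of length at most |x0| + n, so a configuration on V_n
   is determined by a finite list of values. *)
Definition Vn_code n (w : Om n) : seq (option Phi) :=
  [seq if pselect (exists v : Vn x0 n, sval (sval v) = s) is left H
       then Some (w (sval (cid H))) else None
   | s <- short_words k (size (sval x0) + n)].

Lemma Vn_code_inj n : injective (@Vn_code n).
Proof.
move=> w w' /eq_in_map ew; apply: funext => v.
have := ew _ (mem_short_words (inVn_size (svalP v))).
case: pselect => [H|/(_ (ex_intro _ v erefl))//].
by case: (cid H) => v' /= /val_inj /Vn_val_inj -> [].
Qed.

Lemma countable_Omega_n n (F : set (Om n)) : countable F.
Proof.
apply/countable_injP; exists (pickle \o @Vn_code n) => w w' _ _ /=.
by move/(pcan_inj pickleK_inv)/Vn_code_inj.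
Qed.

End Configurations.
Arguments pr {Phi k x0} n s.

Section countable_measure.
Context d (T : measurableType d) (R : realType).
Hypothesis measurable1 : forall t : T, measurable [set t].

Lemma le_measure_countable (nu la : {measure set T -> \bar R}) (F : set T) :
  countable F -> (forall c, F c -> (nu [set c] <= la [set c])%E) -> (nu F <= la F)%E.
Proof.
move=> /countable_injP[f finj] hF.
pose G t := F `&` [set c | f c = t].
have G1 t : G t = set0 \/ exists2 c, F c & G t = [set c].
  have [[c [Fc ct]]|nc] := pselect (exists c, F c /\ f c = t); [right|left].
    exists c => //; apply/seteqP; split => [c' [Fc' /= c't]|c' /= ->//].
    by apply: finj; rewrite ?inE // c't.
  by apply/seteqP; split => // c [Fc ct]; apply: nc; exists c.
have mG t : measurable (G t) by case: (G1 t) => [->|[c _ ->]].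
have FG : F = \bigcup_t G t.
  by apply/seteqP; split => [c Fc|c [t _ []//]]; exists (f c).
have tG : trivIset setT G.
  apply/trivIsetP => i j _ _ ij; apply/seteqP; split => // c [[_ ci] [_ cj]].
  by move: ij; rewrite -ci -cj eqxx.
have mF : measurable F by rewrite FG; exact: bigcupT_measurable.
rewrite FG !measure_semi_bigcup -?FG //; apply: lee_nneseries => // t _.
by case: (G1 t) => [->|[c Fc ->]]; [rewrite !measure0|exact: hF].
Qed.

End countable_measure.

Section Cylinders.
Variables (Phi : PointedCount.type) (k : nat) (x0 : CVertex k).
Local Notation V := (CVertex k).
Local Notation Om n := (Omega_n Phi x0 n).
Local Notation pr := (@pr Phi k x0).

(* A copy of [V -> Phi] per base point, carrying the ring of cylinders over the V_n. *)
Definition Cyl (x : CVertex k) := V -> Phi.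
HB.instance Definition _ := Pointed.copy (Cyl x0) (V -> Phi).

Definition isCyl (A : set (Cyl x0)) := exists n (B : set (Om n)), A = pr n @^-1` B.

Lemma isCyl_level A n : isCyl A -> exists m, (n <= m)%N /\ exists B, A = pr m @^-1` B.
Proof.
move=> [m [B ->]]; exists (maxn n m); split; first exact: leq_maxl.
by exists (restr_ij (leq_maxr n m) @^-1` B).
Qed.

Lemma isCyl2 A A' : isCyl A -> isCyl A' ->
  exists m (B B' : set (Om m)), A = pr m @^-1` B /\ A' = pr m @^-1` B'.
Proof.
move=> [n [B ->]] /(isCyl_level n)[m [hnm [B' ->]]].
by exists m, (restr_ij hnm @^-1` B), B'.
Qed.

Lemma isCyl0 : isCyl set0.
Proof. by exists 0%N, set0; rewrite preimage_set0. Qed.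

Lemma isCylU : setU_closed isCyl.
Proof. by move=> A A' /isCyl2/[apply] -[m [B [B' [-> ->]]]]; exists m, (B `|` B'). Qed.

Lemma isCylD : setD_closed isCyl.
Proof. by move=> A A' /isCyl2/[apply] -[m [B [B' [-> ->]]]]; exists m, (B `\` B'). Qed.

Lemma isCylI : setI_closed isCyl.
Proof. by move=> A A' /isCyl2/[apply] -[m [B [B' [-> ->]]]]; exists m, (B `&` B'). Qed.

HB.instance Definition _ := @isRingOfSets.Build default_measure_display (Cyl x0)
  isCyl isCyl0 isCylU isCylD.

Definition consistent (R : realType) (mu : forall n, {measure set (Om n) -> \bar R}) :=
  forall i j (hij : (i < j)%N) (B : set (Om i)), mu j (restr_ij (ltnW hij) @^-1` B) = mu i B.

End Cylinders.
Arguments Cyl : clear implicits.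

Section CylinderContent.
Variables (R : realType) (Phi : PointedCount.type) (k : nat) (x0 : CVertex k).
Local Notation Om n := (Omega_n Phi x0 n).
Local Notation pr := (@pr Phi k x0).
Local Notation CT := (Cyl Phi k x0).
Variable mu : forall n, {measure set (Om n) -> \bar R}.
Hypothesis mu_consistent : consistent mu.

Lemma consistent_preimage_pr n m (B : set (Om n)) (B' : set (Om m)) :
  pr n @^-1` B = pr m @^-1` B' -> mu n B = mu m B'.
Proof.
wlog hnm : n m B B' / (n <= m)%N.
  by move=> W; case: (leqP n m) => [|/ltnW] hnm; [exact: W|move/esym/W->].
move: hnm; rewrite leq_eqVlt => /orP[/eqP enm|hnm]; first by subst m => /preimage_pr_inj->.
by rewrite -(preimage_pr_restr (ltnW hnm)) => /preimage_pr_inj <-.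
Qed.

Definition cyl_level (A : set CT) : nat :=
  xget 0%N [set n | exists B : set (Om n), A = pr n @^-1` B].

Definition cyl_content (A : set CT) : \bar R :=
  mu (cyl_level A) (pr (cyl_level A) @` A).

Lemma cyl_contentE n (B : set (Om n)) : cyl_content (pr n @^-1` B) = mu n B.
Proof.
rewrite /cyl_content; set L := cyl_level _.
have [B' eB'] : exists B' : set (Om L), pr n @^-1` B = pr L @^-1` B'.
  by apply: (xgetPex 0%N (P := [set m | exists B0 : set (Om m), _ = _])); exists n, B.
by rewrite eB' image_preimage ?pr_surj //; exact/esym/consistent_preimage_pr.
Qed.

Lemma cyl_content_ge0 A : (0 <= cyl_content A)%E.
Proof. exact: measure_ge0. Qed.

Lemma cyl_content0 : cyl_content set0 = 0%E.
Proof. by rewrite -(preimage_set0 (pr 0%N)) cyl_contentE measure0. Qed.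

Lemma cyl_content_additive2 : additive2 cyl_content.
Proof.
move=> A A' /isCyl2/[apply] -[m [B [B' [-> ->]]]] hAA'.
rewrite -preimage_setU !cyl_contentE measureU //.
by apply: (@preimage_pr_inj _ _ x0 m); rewrite preimage_setI hAA' preimage_set0.
Qed.

Lemma le_cyl_content A A' : isCyl A -> isCyl A' -> A `<=` A' ->
  (cyl_content A <= cyl_content A')%E.
Proof.
move=> /isCyl2/[apply] -[m [B [B' [-> ->]]]] AA'; rewrite !cyl_contentE.
apply: le_measure; rewrite ?inE // => w Bw.
by have := AA' (ext w); rewrite /preimage /= pr_ext; apply.
Qed.

End CylinderContent.

Lemma nneseries_ge_term (R : realType) (f : nat -> \bar R) i :
  (forall n, (0 <= f n)%E) -> (f i <= \sum_(n <oo) f n)%E.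
Proof.
move=> f0; rewrite (@nneseriesD1 _ _ i) // leeDl //.
by apply: nneseries_ge0 => n _ _; exact: f0.
Qed.

Section ProjectiveLimit.
Variables (Phi : PointedCount.type) (k : nat) (x0 : CVertex k).
Local Notation V := (CVertex k).
Local Notation pr := (@pr Phi k x0).

(* [v] lies in V_(|x0| + |v|), so the sequence is read at that index. *)
Definition diag_limit (S : nat -> V -> Phi) : V -> Phi :=
  fun v => S (size (sval x0) + size (sval v))%N v.

Lemma pr_diag_limit m (S : nat -> V -> Phi) :
  (forall t, pr (t + m) (S t.+1) = pr (t + m) (S t)) ->
  forall t, pr (t + m) (diag_limit S) = pr (t + m) (S t).
Proof.
move=> coh.
have coh_le t t' : (t <= t')%N -> pr (t + m) (S t') = pr (t + m) (S t).
  elim: t' => [|t' IH]; first by rewrite leqn0 => /eqP ->.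
  rewrite leq_eqVlt ltnS => /orP[/eqP->//|htt']; rewrite -(IH htt').
  by apply: (pr_eq_le _ (coh t')); rewrite leq_add2r.
move=> t; apply: funext => x.
pose l := (size (sval x0) + size (sval (sval x)))%N.
have hx : inVn x0 (l + m) (sval x) := inVn_mono (leq_addr m l) (inVn_sizeD x0 (sval x)).
have e1 := congr1 (@^~ x) (coh_le t (maxn t l) (leq_maxl _ _)).
have e2 := congr1 (@^~ (exist _ _ hx)) (coh_le l (maxn t l) (leq_maxr _ _)).
by rewrite /pr /= in e1 e2; rewrite /pr /diag_limit -e2 e1.
Qed.

Lemma projective_chain (P : nat -> (V -> Phi) -> Prop) m s0 :
  (forall j s s', pr j s = pr j s' -> P j s -> P j s') ->
  (forall j s, P j s -> exists s', P j.+1 s' /\ pr j s' = pr j s) ->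
  P m s0 -> exists s, pr m s = pr m s0 /\ forall n, P (n + m)%N s.
Proof.
move=> Ppr Pstep Ps0.
have /choice[next hnext] : forall js : nat * (V -> Phi), exists s',
    P js.1 js.2 -> P js.1.+1 s' /\ pr js.1 s' = pr js.1 js.2.
  move=> [j s]; have [/Pstep[s' hs']|nPs] := pselect (P j s); first by exists s'.
  by exists s => /nPs.
pose S := fix S t := if t is t'.+1 then next (t' + m, S t')%N else s0.
have PS t : P (t + m)%N (S t).
  by elim: t => [|t IH] //; exact: (hnext (t + m, S t)%N IH).1.
have cohS t : pr (t + m) (S t.+1) = pr (t + m) (S t) := (hnext (t + m, S t)%N (PS t)).2.
exists (diag_limit S); split; first exact: (pr_diag_limit cohS 0).
by move=> n; apply: Ppr (PS n); rewrite pr_diag_limit.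
Qed.

End ProjectiveLimit.

Section ConsistentComparison.
Variables (R : realType) (Phi : PointedCount.type) (k : nat) (x0 : CVertex k).
Local Notation Om n := (Omega_n Phi x0 n).
Local Notation pr := (@pr Phi k x0).
Variables mu la : forall n, {measure set (Om n) -> \bar R}.
Hypotheses (mu_consistent : consistent mu) (la_consistent : consistent la).

(* Otherwise [mu <= la] pointwise on the countable fibre over [pr j s], hence on the
   whole fibre, which by consistency contradicts the hypothesis. *)
Lemma consistent_exceed_succ j s :
  (la j [set pr j s] < mu j [set pr j s])%E ->
  exists s', (la j.+1 [set pr j.+1 s'] < mu j.+1 [set pr j.+1 s'])%E /\ pr j s' = pr j s.
Proof.
move=> hs; apply: contrapT => hn.
pose fibre := restr_ij (ltnW (ltnSn j)) @^-1` [set pr j s].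
have : (mu j.+1 fibre <= la j.+1 fibre)%E.
  apply: le_measure_countable => // [|c hc]; first exact: countable_Omega_n.
  rewrite leNgt; apply/negP => hc'; apply: hn; exists (ext c).
  by rewrite pr_ext; split => //; rewrite -hc -[X in _ = restr_ij _ X](pr_ext c).
by rewrite mu_consistent la_consistent => /(lt_le_trans hs); rewrite ltxx.
Qed.

End ConsistentComparison.

Section CoverMeasure.
Variables (R : realType) (Phi : PointedCount.type) (k : nat) (x0 : CVertex k).
Local Notation Om n := (Omega_n Phi x0 n).
Local Notation pr := (@pr Phi k x0).
Local Notation CT := (Cyl Phi k x0).
Variable mu : forall n, {measure set (Om n) -> \bar R}.
Hypothesis mu_consistent : consistent mu.
Local Notation content := (cyl_content mu).

Lemma cyl_content_setI_measure j (C : set CT) : isCyl C ->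
  exists nu : {measure set (Om j) -> \bar R}, forall B, nu B = content (C `&` pr j @^-1` B).
Proof.
move=> [n [E ->]]; pose E' := restr_ij (leq_maxl n j) @^-1` E.
exists (pushforward (mrestr (mu (maxn n j)) (I : measurable E')) (restr_ij (leq_maxr n j))).
move=> B; have -> : pr n @^-1` E `&` pr j @^-1` B =
    pr (maxn n j) @^-1` (E' `&` restr_ij (leq_maxr n j) @^-1` B) by [].
  by rewrite cyl_contentE // setIC.
Unshelve. by [].
Qed.

Variables (F : nat -> set CT) (F_cyl : forall i, isCyl (F i)).

Definition cover_measure j : {measure set (Om j) -> \bar R} :=
  mseries (fun i => sval (cid (cyl_content_setI_measure j (F_cyl i)))) 0.

Lemma cover_measureE j B :
  cover_measure j B = (\sum_(i <oo) content (F i `&` pr j @^-1` B))%E.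
Proof. by apply: eq_eseriesr => i _; case: cid. Qed.

Lemma cover_measure_consistent : consistent cover_measure.
Proof. by move=> i j hij B; rewrite !cover_measureE. Qed.

(* An excess of [mu] at [w] propagates to a whole configuration extending [w]; it lies
   in some cylinder [F i], and at the level of [F i] no excess is possible. *)
Lemma le_cover_measure1 m (w : Om m) : pr m @^-1` [set w] `<=` \bigcup_i F i ->
  (mu m [set w] <= cover_measure m [set w])%E.
Proof.
move=> hw; rewrite leNgt; apply/negP => hbad.
pose P j s := (cover_measure j [set pr j s] < mu j [set pr j s])%E.
have [|||s [sw Ps]] := @projective_chain _ _ x0 P m (ext w).
- by move=> j s s'; rewrite /P => ->.
- exact: consistent_exceed_succ cover_measure_consistent.
- by rewrite /P pr_ext.
have [i _ Fis] : (\bigcup_i F i) s by apply: hw; rewrite /preimage /= sw pr_ext.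
have [n [E eFi]] := F_cyl i.
have fibre_sub : pr (n + m) @^-1` [set pr (n + m) s] `<=` F i.
  move=> s' /= /(pr_eq_le (leq_addr m n)) hs'.
  by move: Fis; rewrite eFi /preimage /= hs'.
move: (Ps n); rewrite /P cover_measureE; apply/negP; rewrite -leNgt.
apply: le_trans (nneseries_ge_term i (fun _ => cyl_content_ge0 _ _)).
by rewrite setIidr // cyl_contentE.
Qed.

End CoverMeasure.

Lemma cyl_content_sigma_subadditive (R : realType) (Phi : PointedCount.type) (k : nat)
    (x0 : CVertex k) (mu : forall n, {measure set (Omega_n Phi x0 n) -> \bar R}) :
  consistent mu -> measurable_subset_sigma_subadditive (cyl_content mu).
Proof.
move=> mu_consistent A F F_cyl [N [B ->]] AF; rewrite cyl_contentE //.
apply: le_trans (_ : cover_measure mu_consistent F_cyl N B <= _)%E.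
  apply: le_measure_countable => // [|w Bw]; first exact: countable_Omega_n.
  by apply: le_cover_measure1 => s /= sw; apply: AF; rewrite /preimage /= sw.
rewrite cover_measureE; apply: lee_nneseries => [i _ _|i _]; first exact: cyl_content_ge0.
apply: (le_cyl_content mu_consistent); [|exact: F_cyl|exact: subIsetl].
by apply: isCylI; [exact: F_cyl|exists N, B].
Qed.

Lemma sum_tail_invpow2_le (R : realType) N K :
  \sum_(0 <= m < N) (if (K < m)%N then (2:R) ^- m else 0) <= 2 ^- K.
Proof.
have telescope d : \sum_(0 <= m < K.+1 + d) (if (K < m)%N then (2:R) ^- m else 0)
    = 2 ^- K - 2 ^- (K + d).
  elim: d => [|d IH].
    rewrite !addn0 subrr big_nat_cond big1 // => m /andP[/andP[_ hm] _].
    by rewrite ltnNge -ltnS hm.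
  rewrite addnS big_nat_recr //= IH ltnS leq_addr !addnS exprS invfM.
  have h2 : (2:R) != 0 by rewrite pnatr_eq0.
  by field; rewrite !expf_neq0.
case: (leqP N K.+1) => hN.
  rewrite big_nat_cond big1; first by rewrite invr_ge0 exprn_ge0.
  by move=> m /andP[/andP[_ hm] _]; have -> : (K < m)%N = false by lia.
by rewrite -(subnKC (ltnW hN)) telescope gerBl invr_ge0 exprn_ge0.
Qed.

Lemma exists_invpow2_lt (R : realType) (r : R) : 0 < r -> exists K, 2 ^- K < r.
Proof.
move=> r0; exists (Num.truncn r^-1).+1.
rewrite -[r]invrK ltf_pV2 ?posrE ?invr_gt0 ?exprn_gt0 //.
apply: lt_le_trans (truncnS_gt _) _.
rewrite -natrX ler_nat !invrK; exact: ltnW (ltn_expl _ (isT : (1 < 2)%N)).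
Qed.

Section RhoTopology.
Variables (R : realType) (Phi : PointedCount.type) (k : nat) (e : nat -> CVertex k).
Local Notation V := (CVertex k).
Local Notation rho := (@rho R Phi k e).

Lemma rho_ge_invpow2 (s s' : V -> Phi) m : s (e m) != s' (e m) ->
  (((2:R) ^- m)%:E <= rho s s')%E.
Proof.
move=> hd; rewrite /rho.
apply: le_trans (nneseries_ge_term m _); first by rewrite hd mulr1.
by move=> n; rewrite lee_fin mulr_ge0 // invr_ge0 exprn_ge0.
Qed.

Lemma rho_le_invpow2 (s s' : V -> Phi) K :
  (forall m, (m <= K)%N -> s (e m) = s' (e m)) -> (rho s s' <= ((2:R) ^- K)%:E)%E.
Proof.
move=> agree; apply: lime_le.
  by apply: is_cvg_nneseries => n _ _; rewrite lee_fin mulr_ge0 // invr_ge0 exprn_ge0.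
apply: nearW => N; rewrite sumEFin lee_fin.
apply: le_trans (sum_tail_invpow2_le R N K); apply: ler_sum => m _.
case: ifPn => [_|]; last by rewrite -leqNgt => /agree ->; rewrite eqxx mulr0.
by case: (_ != _); rewrite ?mulr1 ?mulr0 // invr_ge0 exprn_ge0.
Qed.

Variable x0 : CVertex k.
Local Notation pr := (@pr Phi k x0).

Lemma enum_covers_Vn (he : bijective e) n :
  exists K, forall x, inVn x0 n x -> exists2 m, (m <= K)%N & e m = x.
Proof.
have [einv eK Ke] := he.
pose f w := if insub w is Some v then einv v else 0%N.
exists (\max_(w <- short_words k (size (sval x0) + n)) f w) => x hx.
exists (einv x) => //; have := @leq_bigmax_seq _ _ xpredT f _ (mem_short_words (inVn_size hx)) isT.
by rewrite /f valK.
Qed.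

Lemma Vn_covers_enum K : exists n, forall m, (m <= K)%N -> inVn x0 n (e m).
Proof.
exists (\max_(j < K.+1) (size (sval x0) + size (sval (e j))))%N => m hm.
apply: inVn_mono _ (inVn_sizeD x0 (e m)).
exact: (@leq_bigmax _ (fun j : 'I_K.+1 => size (sval x0) + size (sval (e j)))%N
  (Ordinal (hm : (m < K.+1)%N))).
Qed.

Lemma isCyl_rho_open (he : bijective e) (A : set (V -> Phi)) :
  @isCyl Phi k x0 A -> @rho_open R Phi k e A.
Proof.
move=> [n [B ->]] s Bs; have [K hK] := enum_covers_Vn he n.
exists (2 ^- K); split; first by rewrite invr_gt0 exprn_gt0.
move=> s' hss'; rewrite /preimage /=; suff -> : pr n s' = pr n s by [].
apply: funext => x; rewrite /pr; have [m hm <-] := hK _ (svalP x).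
apply/eqP; apply: contraTT hss'; rewrite eq_sym -leNgt => /rho_ge_invpow2.
apply: le_trans; rewrite lee_fin lef_pV2 ?posrE ?exprn_gt0 //.
by rewrite ler_eXn2l ?ltr1n.
Qed.

Lemma rho_open_sigma_isCyl (U : set (V -> Phi)) :
  @rho_open R Phi k e U -> <<s @isCyl Phi k x0>> U.
Proof.
move=> hU; have -> : U = \bigcup_n (pr n @^-1` [set w | pr n @^-1` [set w] `<=` U]).
  apply/seteqP; split => [s Us|s [n _]]; last exact.
  have [r [r0 hr]] := hU s Us; have [K hK] := exists_invpow2_lt r0.
  have [n hn] := Vn_covers_enum K.
  exists n => // s' /= ss'; apply/hr/(le_lt_trans (rho_le_invpow2 _)); last exact: hK.
  by move=> m /hn hm; exact: (congr1 (@^~ (exist _ _ hm)) (esym ss')).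
apply: sigma_algebra_bigcup => n; apply: sub_sigma_algebra.
by exists n, [set w | pr n @^-1` [set w] `<=` U].
Qed.

Lemma sigma_rho_open_isCyl (he : bijective e) :
  <<s @rho_open R Phi k e>> = <<s @isCyl Phi k x0>>.
Proof.
apply/seteqP; split; apply: smallest_sub => //; try exact: smallest_sigma_algebra.
  exact: rho_open_sigma_isCyl.
by move=> A /(isCyl_rho_open he) hA; exact: sub_sigma_algebra.
Qed.

End RhoTopology.

Section Extension.
Variables (R : realType) (Phi : PointedCount.type) (k : nat) (e : nat -> CVertex k)
  (he : bijective e) (x0 : CVertex k).
Local Notation Om n := (Omega_n Phi x0 n).
Local Notation pr := (@pr Phi k x0).
Local Notation Omega := (Omega R Phi e).
Variable mu : forall n, {measure set (Om n) -> \bar R}.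
Hypothesis mu_consistent : consistent mu.

HB.instance Definition _ := isContent.Build _ (Cyl Phi k x0) R (cyl_content mu)
  (@cyl_content_ge0 _ _ _ _ mu)
  ((measure_function.additive2P (cyl_content0 mu_consistent)).2 (cyl_content_additive2 mu_consistent)).

HB.instance Definition _ := Content_SigmaSubAdditive_isMeasure.Build _ R (Cyl Phi k x0)
  (cyl_content mu) (cyl_content_sigma_subadditive mu_consistent).

Lemma measurable_Omega_cyl (A : set Omega) : measurable A ->
  (@measurable _ (g_sigma_algebraType (@measurable _ (Cyl Phi k x0)))) A.
Proof.
by move=> mA; have : <<s @rho_open R Phi k e>> A by []; rewrite (sigma_rho_open_isCyl R Phi x0 he).
Qed.

Definition cyl_extension : set Omega -> \bar R := measure_extension (cyl_content mu).

Let cyl_extension0 : cyl_extension set0 = 0%E.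
Proof. exact: measure0. Qed.

Let cyl_extension_ge0 A : (0 <= cyl_extension A)%E.
Proof. exact: measure_ge0. Qed.

Let cyl_extension_semi_sigma_additive : semi_sigma_additive cyl_extension.
Proof.
move=> F mF tF mUF; apply: (measure_semi_sigma_additive (s := measure_extension _)) => //.
- by move=> i; exact: measurable_Omega_cyl.
- exact: measurable_Omega_cyl.
Qed.

HB.instance Definition _ := isMeasure.Build _ Omega R cyl_extension
  cyl_extension0 cyl_extension_ge0 cyl_extension_semi_sigma_additive.

Lemma exists_measure_pr : exists mubar : {measure set Omega -> \bar R},
  forall n (B : set (Om n)), mubar (@pi_n R Phi k e x0 n @^-1` B) = mu n B.
Proof.
suff cyl_extension_pr n (B : set (Om n)) :
    cyl_extension (@pi_n R Phi k e x0 n @^-1` B) = mu n B by exists cyl_extension.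
rewrite /cyl_extension /measure_extension measurable_mu_extE; last by exists n, B.
exact: cyl_contentE.
Qed.

Lemma consistent_measure_unique (nu1 nu2 : {measure set Omega -> \bar R}) :
  (exists n0, sigma_finite setT (mu n0)) ->
  (forall n B, nu1 (@pi_n R Phi k e x0 n @^-1` B) = mu n B) ->
  (forall n B, nu2 (@pi_n R Phi k e x0 n @^-1` B) = mu n B) ->
  forall A : set Omega, measurable A -> nu1 A = nu2 A.
Proof.
move=> [n0 [F FT hF]] nu1_pr nu2_pr.
apply: (@measure_unique _ R Omega (@isCyl Phi k x0) (fun i => pr n0 @^-1` F i)).
- exact: sigma_rho_open_isCyl.
- exact: isCylI.
- by move=> i; exists n0, (F i).
- by rewrite -preimage_bigcup -FT preimage_setT.
- by move=> _ [n [B ->]]; rewrite nu1_pr nu2_pr.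
- by move=> i; rewrite nu1_pr; exact: (hF i).2.
Qed.

End Extension.

Theorem mainTheorem8 (R : realType) (Phi : PointedCount.type) (k : nat) (hk : (1 <= k)%N)
  (e : nat -> CVertex k) (he : bijective e) (x0 : CVertex k)
  (mu : forall n : nat, {measure set (Omega_n Phi x0 n) -> \bar R})
  (hcons : forall (i j : nat) (hij : (i < j)%N) (B : set (Omega_n Phi x0 i)),
      mu j (restr_ij (ltnW hij) @^-1` B) = mu i B)
  (hsf : exists n0 : nat, sigma_finite setT (mu n0)) :
  exists mubar : {measure set (Omega R Phi e) -> \bar R},
    (forall (n : nat) (B : set (Omega_n Phi x0 n)),
        mubar (@pi_n R Phi k e x0 n @^-1` B) = mu n B) /\
    (forall nu : {measure set (Omega R Phi e) -> \bar R},
        (forall (n : nat) (B : set (Omega_n Phi x0 n)),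
            nu (@pi_n R Phi k e x0 n @^-1` B) = mu n B) ->
        forall A : set (Omega R Phi e), measurable A -> nu A = mubar A).
Proof.
have [mubar mubar_pr] := exists_measure_pr he hcons.
exists mubar; split => // nu nu_pr A.
exact: (consistent_measure_unique he hsf nu_pr mubar_pr).
Qed.
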